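(* Let $f=f(x_1,\ldots,x_n)$ be a positive Boolean function with exactly $k\ge 0$ relevant variables. Then the number $r(f)$ of extremal points of $f$ satisfies $r(f)\ge k+1$. Moreover, $r(f)=k+1$ if and only if $f$ is linear read-once.
   Context: Let $B=\{0,1\}$. For $\mathbf{x},\mathbf{y}\in B^n$, write $\mathbf{x}\preceq\mathbf{y}$ if $(\mathbf{x})_i=1$ implies $(\mathbf{y})_i=1$ for all $i$. A Boolean function $f$ on $B^n$ is positive if $f(\mathbf{x})=1$ and $\mathbf{x}\preceq\mathbf{y}$ imply $f(\mathbf{y})=1$. A maximal zero of $f$ is a $\preceq$-maximal point of $f^{-1}(0)$; a minimal one is a $\preceq$-minimal point of $f^{-1}(1)$; extremal points are the maximal zeros and minimal ones, and $r(f)$ denotes their number. A variable $x_k$ is relevant for $f$ if the functions $f_{|x_k=0}$ and $f_{|x_k=1}$ (obtained by fixing $x_k$) are not identical. A function is linear read-once (lro) if it is constant or can be represented by a nested formula, defined recursively: the literals $x$ and $\overline{x}$ are nested formulas; and $x\vee t$, $x\wedge t$, $\overline{x}\vee t$, $\overline{x}\wedge t$ are nested formulas whenever $x$ is a variable and $t$ is a nested formula containing neither $x$ nor $\overline{x}$. *)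

From mathcomp Require Import all_boot.
Set Implicit Arguments. Unset Strict Implicit. Unset Printing Implicit Defensive.

(* Points of B^n = {0,1}^n, coordinates indexed by 'I_n; 1 = true, 0 = false *)
Definition pt (n : nat) := {ffun 'I_n -> bool}.

Definition pleq n (x y : pt n) : bool := [forall i, x i ==> y i].

Definition positive n (f : pt n -> bool) : Prop :=
  forall x y : pt n, f x -> pleq x y -> f y.

Definition maxzero n (f : pt n -> bool) (x : pt n) : bool :=
  ~~ f x && [forall y : pt n, (~~ f y && pleq x y) ==> (y == x)].

Definition minone n (f : pt n -> bool) (x : pt n) : bool :=
  f x && [forall y : pt n, (f y && pleq y x) ==> (y == x)].

Definition r n (f : pt n -> bool) : nat :=
  #|[set x : pt n | maxzero f x || minone f x]|.

Definition fixc n (x : pt n) (k : 'I_n) (b : bool) : pt n :=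
  [ffun j => if j == k then b else x j].

Definition relevantb n (f : pt n -> bool) (k : 'I_n) : bool :=
  [exists x : pt n, f (fixc x k false) != f (fixc x k true)].

Definition nrel n (f : pt n -> bool) : nat := #|[set k : 'I_n | relevantb f k]|.

(* Lit i s     : the literal x_i (s = true) or its negation (s = false).
   Node i s c t: l ∨ t (c = true) or l ∧ t (c = false), where l is the
                 literal of x_i with sign s. *)
Inductive nested (n : nat) : Type :=
  | Lit : 'I_n -> bool -> nested n
  | Node : 'I_n -> bool -> bool -> nested n -> nested n.

Fixpoint nvars n (t : nested n) : seq 'I_n :=
  match t with
  | Lit i _ => [:: i]
  | Node i _ _ t' => i :: nvars t'
  end.

Fixpoint wf_nested n (t : nested n) : bool :=
  match t with
  | Lit _ _ => true
  | Node i _ _ t' => (i \notin nvars t') && wf_nested t'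
  end.

Definition lit_eval n (i : 'I_n) (s : bool) (x : pt n) : bool :=
  if s then x i else ~~ x i.

Fixpoint neval n (t : nested n) (x : pt n) : bool :=
  match t with
  | Lit i s => lit_eval i s x
  | Node i s c t' => if c then lit_eval i s x || neval t' x
                     else lit_eval i s x && neval t' x
  end.

Definition lro n (f : pt n -> bool) : Prop :=
  (exists c : bool, forall x : pt n, f x = c) \/
  (exists t : nested n, wf_nested t /\ forall x : pt n, f x = neval t x).

From mathcomp Require Import all_boot.
From Stdlib Require Import FunctionalExtensionality.
Set Implicit Arguments. Unset Strict Implicit. Unset Printing Implicit Defensive.

(* Fixing a relevant variable x_i of f to 0 loses at least one extremal point: the
   extremal points of f_{|x_i=0} inject into those of f (a maximal zero z of the
   restriction with f z = 1 is sent to z with z_i lowered), and no minimal one of f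
   containing i is hit; dually for x_i = 1.  A variable can be chosen whose
   restriction keeps every other variable relevant (if some x_j dies under x_i = 0,
   minimality of the number of minimal ones containing i makes x_i and x_j twins,
   and then x_i = 1 works), which gives r(f) >= k + 1 by induction.  A literal
   x_d = b that alone forces the value of f costs exactly one extremal point, and
   nested formulas are exactly the functions built by adding such literals, so lro
   functions attain the bound.  Conversely, if r(f) = k + 1, the restriction has
   the same property, hence is lro, and uniqueness of the lost extremal point
   forces f itself to have a forcing literal. *)

Section Points.
Variable n : nat.
Implicit Types (x y z a : pt n) (f : pt n -> bool).

Definition ptzero : pt n := [ffun _ => false].
Definition ptone : pt n := [ffun _ => true].

Lemma fixcE x k b l : fixc x k b l = if l == k then b else x l.
Proof. by rewrite ffunE. Qed.

Lemma fixc_at x k b : fixc x k b k = b.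
Proof. by rewrite fixcE eqxx. Qed.

Lemma fixc_ne x k b l : l != k -> fixc x k b l = x l.
Proof. by rewrite fixcE => /negPf ->. Qed.

Lemma fixc_id x k b : x k = b -> fixc x k b = x.
Proof. by move=> <-; apply/ffunP => l; rewrite fixcE; case: eqP => // ->. Qed.

Lemma fixcK x k b c : fixc (fixc x k b) k c = fixc x k c.
Proof. by apply/ffunP => l; rewrite !fixcE; case: eqP. Qed.

Lemma fixcC x k l b c : k != l -> fixc (fixc x k b) l c = fixc (fixc x l c) k b.
Proof.
move=> nkl; apply/ffunP => m; rewrite !fixcE.
by case: (eqVneq m l) => [->|//]; rewrite eq_sym (negPf nkl).
Qed.

Lemma pleqP x y : reflect (forall l, x l -> y l) (pleq x y).
Proof.
apply: (iffP forallP) => H l; first by move=> xl; have /implyP := H l; apply.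
by apply/implyP; apply: H.
Qed.

Lemma pleq_refl x : pleq x x.
Proof. by apply/pleqP. Qed.

Lemma pleq_trans x y z : pleq x y -> pleq y z -> pleq x z.
Proof. by move=> /pleqP H1 /pleqP H2; apply/pleqP => l /H1 /H2. Qed.

Lemma pleq_fixc x y k b : pleq x y -> pleq (fixc x k b) (fixc y k b).
Proof. by move=> /pleqP H; apply/pleqP => l; rewrite !fixcE; case: eqP => // _ /H. Qed.

Lemma fixcF_pleq x k : pleq (fixc x k false) x.
Proof. by apply/pleqP => l; rewrite fixcE; case: eqP. Qed.

Lemma pleq_fixcT x k : pleq x (fixc x k true).
Proof. by apply/pleqP => l; rewrite fixcE; case: eqP. Qed.

Lemma minoneP f x :
  reflect (f x /\ forall y, f y -> pleq y x -> y = x) (minone f x).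
Proof.
apply: (iffP andP) => [[fx /forallP H]|[fx H]]; split=> //.
  by move=> y fy le; have /implyP/(_ _)/eqP := H y; apply; rewrite fy.
by apply/forallP => y; apply/implyP => /andP[fy le]; rewrite (H y fy le).
Qed.

Lemma maxzeroP f x :
  reflect (~~ f x /\ forall y, ~~ f y -> pleq x y -> y = x) (maxzero f x).
Proof.
apply: (iffP andP) => [[fx /forallP H]|[fx H]]; split=> //.
  by move=> y fy le; have /implyP/(_ _)/eqP := H y; apply; rewrite fy.
by apply/forallP => y; apply/implyP => /andP[fy le]; rewrite (H y fy le).
Qed.

Definition weight x := #|[set l | x l]|.

Lemma pleq_subset x y : pleq x y -> [set l | x l] \subset [set l | y l].
Proof. by move=> /pleqP H; apply/subsetP => l; rewrite !inE; apply: H. Qed.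

Lemma pleq_weight_eq x y : pleq x y -> weight y <= weight x -> x = y.
Proof.
move=> le le_w; have /eqP E : [set l | x l] == [set l | y l].
  by rewrite eqEcard pleq_subset.
by apply/ffunP => l; have := congr1 (fun A : {set 'I_n} => l \in A) E; rewrite !inE.
Qed.

Lemma minone_below f y : f y -> exists a, minone f a /\ pleq a y.
Proof.
move=> fy.
case: (arg_minnP weight (P := fun a => f a && pleq a y) (i0 := y)).
  by rewrite fy pleq_refl.
move=> a /andP[fa lay] Hmin; exists a; split=> //.
apply/minoneP; split=> // z fz lza.
by apply: (pleq_weight_eq lza); apply: Hmin; rewrite fz (pleq_trans lza lay).
Qed.

Lemma maxzero_above f y : ~~ f y -> exists z, maxzero f z /\ pleq y z.
Proof.
move=> fy.
case: (arg_maxnP weight (P := fun a => ~~ f a && pleq y a) (i0 := y)).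
  by rewrite fy pleq_refl.
move=> a /andP[fa lay] Hmax; exists a; split=> //.
apply/maxzeroP; split=> // z fz lza.
by apply/esym/(pleq_weight_eq lza); apply: Hmax; rewrite fz (pleq_trans lay lza).
Qed.

Definition restrict f k b := fun x => f (fixc x k b).

Lemma restrict_positive f k b : positive f -> positive (restrict f k b).
Proof. by move=> P x y fx le; apply: P fx (pleq_fixc _ _ le). Qed.

Lemma relevantP f k :
  reflect (exists x, f (fixc x k false) != f (fixc x k true)) (relevantb f k).
Proof. exact: existsP. Qed.

Lemma relevant_positive f k : positive f -> relevantb f k ->
  exists x, ~~ f (fixc x k false) /\ f (fixc x k true).
Proof.
move=> P /relevantP [x H]; exists x.
case e1: (f (fixc x k false)) H; case e2: (f (fixc x k true)) => //= _.
by move: e2; rewrite (P _ _ e1 (pleq_trans (fixcF_pleq x k) (pleq_fixcT x k))).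
Qed.

Lemma irrelevant_fixc f k x b : ~~ relevantb f k -> f (fixc x k b) = f x.
Proof.
move=> H; have E : f (fixc x k false) = f (fixc x k true).
  by apply/eqP; apply: contraNT H => ne; apply/relevantP; exists x.
by rewrite -{2}(@fixc_id x k (x k)) //; case: b; case: (x k).
Qed.

Lemma nrel0_constant f : nrel f = 0 -> forall x y, f x = f y.
Proof.
move=> /eqP; rewrite cards_eq0 => /eqP R0.
have irr k : ~~ relevantb f k.
  apply/negP => rk; have : k \in [set k | relevantb f k] by rewrite inE.
  by rewrite R0 inE.
suff H m x y : #|[set l | x l != y l]| = m -> f x = f y by move=> x y; apply: (H _ x y).
elim: m x y => [|m IH] x y.
  move/eqP; rewrite cards_eq0 => /eqP E; congr f; apply/ffunP => l.
  have : l \notin [set l | x l != y l] by rewrite E inE.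
  by rewrite inE negbK => /eqP.
move=> Hc; have [l Hl] : exists l, l \in [set l | x l != y l].
  by apply/set0Pn; rewrite -card_gt0 Hc.
rewrite -(irrelevant_fixc x (y l) (irr l)); apply: IH.
have -> : [set l' | fixc x l (y l) l' != y l'] = [set l' | x l' != y l'] :\ l.
  by apply/setP => l'; rewrite !inE fixcE; case: (eqVneq l' l) => [->|]; rewrite ?eqxx.
by move: Hc; rewrite (cardsD1 l) Hl => -[].
Qed.

Lemma constant_nrel0 f c : (forall x, f x = c) -> nrel f = 0.
Proof.
move=> H; apply/eqP; rewrite cards_eq0; apply/eqP/setP => k; rewrite !inE.
by apply/negbTE/negP => /relevantP [x]; rewrite !H eqxx.
Qed.

Lemma constant_r f c : (forall x, f x = c) -> r f = 1.
Proof.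
move=> H; rewrite /r.
case: c H => H.
  rewrite (_ : [set x | _] = [set ptzero]) ?cards1 //; apply/setP => x; rewrite !inE.
  have -> : maxzero f x = false by apply/negP => /maxzeroP []; rewrite H.
  apply/minoneP/eqP => [[_ Hm]|->].
    by apply/esym/Hm; rewrite ?H //; apply/pleqP => l; rewrite ffunE.
  split=> // y _ /pleqP le; apply/ffunP => l; rewrite ffunE.
  by apply/negP => /le; rewrite ffunE.
rewrite (_ : [set x | _] = [set ptone]) ?cards1 //; apply/setP => x; rewrite !inE.
have -> : minone f x = false by apply/negP => /minoneP []; rewrite H.
rewrite orbF; apply/maxzeroP/eqP => [[_ Hm]|->].
  by apply/esym/Hm; rewrite ?H //; apply/pleqP => l; rewrite ffunE.
split; first by rewrite H.
by move=> y _ /pleqP le; apply/ffunP => l; rewrite ffunE; apply: le; rewrite ffunE.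
Qed.

End Points.

Definition extremal n (f : pt n -> bool) := [set x | maxzero f x || minone f x].

Definition forces n (f : pt n -> bool) (d : 'I_n) (b c : bool) : Prop :=
  forall x, f (fixc x d b) = c.

Section RestrictFalse.
Variable n : nat.
Implicit Types (x y z a : pt n).
Variable f : pt n -> bool.
Hypothesis fpos : positive f.
Variable i : 'I_n.
Local Notation f0 := (restrict f i false).

Lemma restrictF_le x : f0 x -> f x.
Proof. by move=> h; apply: fpos h (fixcF_pleq _ _). Qed.

Lemma minone_restrictF x : minone f0 x -> x i = false.
Proof.
case/minoneP => fx H.
have := H (fixc x i false); rewrite /restrict fixcK => /(_ fx (fixcF_pleq _ _)) <-.
by rewrite fixc_at.
Qed.

Lemma maxzero_restrictF x : maxzero f0 x -> x i = true.
Proof.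
case/maxzeroP => fx H.
have := H (fixc x i true); rewrite /restrict fixcK => /(_ fx (pleq_fixcT _ _)) <-.
by rewrite fixc_at.
Qed.

Lemma minone_restrictF_minone x : minone f0 x -> minone f x.
Proof.
move=> mo; have xi := minone_restrictF mo; case/minoneP: mo => f0x H.
apply/minoneP; split; first by rewrite -(fixc_id xi).
move=> y fy le; apply: H => //.
have yi : y i = false by apply/negP => /(pleqP _ _ le); rewrite xi.
by rewrite /restrict fixc_id.
Qed.

Definition extremal_lift x := if f x && x i then fixc x i false else x.

Lemma maxzero_restrictF_lift x : maxzero f0 x -> maxzero f (extremal_lift x).
Proof.
move=> mz; have xi := maxzero_restrictF mz.
move/maxzeroP: mz => [f0x H]; rewrite /extremal_lift xi andbT.
case fx: (f x); apply/maxzeroP; split; rewrite ?fx //.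
  move=> y fy le; case yi: (y i).
    have : pleq x y.
      apply/pleqP => l; case: (eqVneq l i) => [->|ne]; first by rewrite yi.
      by move/pleqP: le => le; rewrite -(fixc_ne x false ne) => /le.
    by move/(fpos fx); rewrite (negPf fy).
  have le' : pleq x (fixc y i true).
    apply/pleqP => l; rewrite fixcE; case: (eqVneq l i) => // ne.
    by rewrite -(fixc_ne x false ne); move/pleqP: le; apply.
  have := H (fixc y i true); rewrite /restrict fixcK (fixc_id yi) fy.
  by move=> /(_ isT le') <-; rewrite fixcK fixc_id.
move=> y fy le; apply: H => //; apply/negP => /restrictF_le; exact/negP.
Qed.

Lemma extremal_lift_extremal x : x \in extremal f0 -> extremal_lift x \in extremal f.
Proof.
rewrite !inE => /orP [/maxzero_restrictF_lift -> //|mo].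
by rewrite /extremal_lift (minone_restrictF mo) andbF minone_restrictF_minone ?orbT.
Qed.

Lemma extremal_lift_inj : {in extremal f0 &, injective extremal_lift}.
Proof.
have zero x : x \in extremal f0 -> x i -> ~~ f0 x.
  by rewrite inE => /orP [/maxzeroP [] //|/minone_restrictF ->].
have one x : x \in extremal f0 -> ~~ x i -> f0 x.
  by rewrite inE => /orP [/maxzero_restrictF ->|/minoneP []].
have cross x y : x \in extremal f0 -> y \in extremal f0 -> x i ->
    fixc x i false = y -> False.
  move=> Ex Ey xi e; have := one y Ey; rewrite -e fixc_at => /(_ isT).
  by rewrite /restrict !fixcK; have := zero x Ex xi; rewrite /restrict => /negPf ->.
move=> x y Ex Ey; rewrite /extremal_lift.
case: (boolP (f x && x i)) => [/andP [_ xi]|_]; case: (boolP (f y && y i)) => [/andP [_ yi]|_] //.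
- move=> e; apply/ffunP => l; case: (eqVneq l i) => [->|ne]; first by rewrite xi yi.
  by rewrite -(fixc_ne x false ne) e fixc_ne.
- by move/(cross x y Ex Ey xi).
- by move/esym/(cross y x Ey Ex yi).
Qed.

Definition lost_extremal := extremal f :\: [set extremal_lift x | x in extremal f0].

Lemma lift_subset : [set extremal_lift x | x in extremal f0] \subset extremal f.
Proof. by apply/subsetP => _ /imsetP [x Ex ->]; apply: extremal_lift_extremal. Qed.

Lemma r_restrictF : r f = r f0 + #|lost_extremal|.
Proof.
rewrite /r -!/(extremal _) /lost_extremal cardsD (setIidPr lift_subset).
rewrite card_in_imset; last exact: extremal_lift_inj.
by rewrite subnKC // -(card_in_imset extremal_lift_inj) subset_leq_card // lift_subset.
Qed.

Lemma minone_lost a : minone f a -> a i -> a \in lost_extremal.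
Proof.
move=> mo ai; rewrite !inE mo orbT andbT.
apply/imsetP => -[x _]; rewrite /extremal_lift.
case: ifP => [_ e|nx e]; first by move: ai; rewrite e fixc_at.
by move: nx; rewrite -e ai andbT; case/minoneP: mo => ->.
Qed.

Lemma maxzero_not_lost z : maxzero f z -> z i -> z \notin lost_extremal -> maxzero f0 z.
Proof.
move=> mz zi; rewrite !inE mz andbT negbK => /imsetP [x Ex].
rewrite /extremal_lift; case: ifP => [_ e|_ e]; first by move: zi; rewrite e fixc_at.
by move: Ex; rewrite -e inE => /orP [//|/minone_restrictF]; rewrite zi.
Qed.

Lemma lost_forcesTT : forces f i true true -> lost_extremal \subset [set fixc (ptzero n) i true].
Proof.
move=> dom; apply/subsetP => x; rewrite !inE => /andP [nimg Ex].
case xi: (x i).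
  have fx : f x by rewrite -(fixc_id xi).
  move: Ex; rewrite (_ : maxzero f x = false); last by apply/negbTE/negP => /maxzeroP []; rewrite fx.
  move=> /minoneP [_ H]; apply/eqP/esym/H; first exact: dom.
  by apply/pleqP => l; rewrite fixcE ffunE; case: eqP => [->|].
case/negP: nimg; apply/imsetP; move: Ex => /orP [mz|mo].
  have [nfx Hx] := maxzeroP _ _ mz.
  exists (fixc x i true); last by rewrite /extremal_lift dom fixc_at fixcK fixc_id.
  rewrite inE; apply/orP; left; apply/maxzeroP; split.
    by rewrite /restrict fixcK fixc_id.
  move=> y fy le; have le' : pleq x (fixc y i false).
    by rewrite -{1}(fixc_id xi) -(fixcK x i true false); apply: pleq_fixc.
  have yi : y i = true by apply: (pleqP _ _ le); rewrite fixc_at.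
  by rewrite -(Hx _ fy le') fixcK fixc_id.
exists x; last by rewrite /extremal_lift xi andbF.
rewrite inE; apply/orP; right; apply/minoneP; case/minoneP: mo => fx H; split.
  by rewrite /restrict fixc_id.
move=> y fy le; apply: H => //.
have yi : y i = false by apply/negP => /(pleqP _ _ le); rewrite xi.
by rewrite -(fixc_id yi).
Qed.

End RestrictFalse.

Section Duality.
Variable n : nat.
Implicit Types (x y : pt n) (f : pt n -> bool) (t : nested n).

Definition compl_pt x : pt n := [ffun l => ~~ x l].
Definition dual f := fun x => ~~ f (compl_pt x).

Lemma compl_ptE x l : compl_pt x l = ~~ x l. Proof. by rewrite ffunE. Qed.

Lemma compl_ptK : involutive compl_pt.
Proof. by move=> x; apply/ffunP => l; rewrite !ffunE negbK. Qed.

Lemma compl_pt_inj : injective compl_pt. Proof. exact: inv_inj compl_ptK. Qed.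

Lemma pleq_compl x y : pleq (compl_pt x) (compl_pt y) = pleq y x.
Proof.
apply/pleqP/pleqP => H l; last by rewrite !compl_ptE; apply: contra; apply: H.
by apply: contraTT => nx; have := H l; rewrite !compl_ptE; apply.
Qed.

Lemma fixc_compl x k b : fixc (compl_pt x) k b = compl_pt (fixc x k (~~ b)).
Proof.
by apply/ffunP => l; rewrite !fixcE !compl_ptE fixcE; case: (l == k); rewrite ?negbK.
Qed.

Lemma dual_positive f : positive f -> positive (dual f).
Proof.
move=> P x y fx le; apply: contra fx => fy.
by apply: (P _ _ fy); rewrite pleq_compl.
Qed.

Lemma minone_dual f x : minone (dual f) x = maxzero f (compl_pt x).
Proof.
apply/minoneP/maxzeroP => -[fx H]; split => // y fy le.
  rewrite -(compl_ptK y); congr compl_pt; apply: H; rewrite /dual ?compl_ptK //.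
  by rewrite -pleq_compl compl_ptK.
by apply: compl_pt_inj; apply: H => //; rewrite pleq_compl.
Qed.

Lemma maxzero_dual f x : maxzero (dual f) x = minone f (compl_pt x).
Proof.
apply/maxzeroP/minoneP => -[fx H]; split.
- by move: fx; rewrite /dual negbK.
- move=> y fy le; rewrite -(compl_ptK y); congr compl_pt.
  apply: H; rewrite /dual ?compl_ptK ?negbK //.
  by rewrite -pleq_compl compl_ptK.
- by rewrite /dual fx.
- move=> y fy le; apply: compl_pt_inj; apply: H; first by rewrite /dual negbK in fy.
  by rewrite pleq_compl.
Qed.

Lemma r_dual f : r (dual f) = r f.
Proof.
rewrite /r -!/(extremal _).
have -> : extremal (dual f) = [set compl_pt x | x in extremal f];
  last by rewrite card_imset //; exact: compl_pt_inj.
apply/setP => x; rewrite inE minone_dual maxzero_dual orbC.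
apply/idP/imsetP => [h|[y Ey ->]]; first by exists (compl_pt x); rewrite ?inE ?compl_ptK.
by move: Ey; rewrite inE compl_ptK.
Qed.

Lemma relevant_dual f k : relevantb (dual f) k = relevantb f k.
Proof.
apply/relevantP/relevantP => -[x H]; exists (compl_pt x); move: H.
  by rewrite /dual !fixc_compl /=; case: (f _); case: (f _).
by rewrite /dual !fixc_compl /= !compl_ptK; case: (f _); case: (f _).
Qed.

Lemma dual_restrict f k b : dual (restrict f k b) = restrict (dual f) k (~~ b).
Proof.
by apply: functional_extensionality => x; rewrite /dual /restrict fixc_compl.
Qed.

Lemma dual_forces f d b c : forces (dual f) d b c -> forces f d (~~ b) (~~ c).
Proof.
by move=> D y; have := D (compl_pt y); rewrite /dual fixc_compl compl_ptK => <-; rewrite negbK.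
Qed.

Fixpoint nested_dual t : nested n :=
  match t with
  | Lit i s => Lit i s
  | Node i s c t' => Node i s (~~ c) (nested_dual t')
  end.

Lemma nvars_dual t : nvars (nested_dual t) = nvars t.
Proof. by elim: t => //= i s c t ->. Qed.

Lemma wf_nested_dual t : wf_nested (nested_dual t) = wf_nested t.
Proof. by elim: t => //= i s c t ->; rewrite nvars_dual. Qed.

Lemma lit_eval_compl i s x : lit_eval i s (compl_pt x) = ~~ lit_eval i s x.
Proof. by rewrite /lit_eval compl_ptE; case: s; rewrite ?negbK. Qed.

Lemma neval_dual t x : neval (nested_dual t) x = ~~ neval t (compl_pt x).
Proof.
elim: t => [i s|i s c t IH] /=; first by rewrite lit_eval_compl negbK.
by case: c; rewrite /= IH lit_eval_compl ?negb_or ?negb_and !negbK.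
Qed.

Lemma lro_dual f : lro f -> lro (dual f).
Proof.
case=> [[c H]|[t [wf H]]]; [left; exists (~~ c) | right; exists (nested_dual t)].
  by move=> x; rewrite /dual H.
by split; rewrite ?wf_nested_dual // => x; rewrite neval_dual /dual H.
Qed.

End Duality.

Section NestedFormulas.
Variable n : nat.
Implicit Types (x : pt n) (f : pt n -> bool) (t : nested n).

Lemma lit_evalE j s x : lit_eval j s x = (x j == s).
Proof. by rewrite /lit_eval; case: s; case: (x j). Qed.

Lemma neval_fixc t i b x : i \notin nvars t -> neval t (fixc x i b) = neval t x.
Proof.
elim: t => [j s|j s c t IH] /=; first by rewrite inE => ij; rewrite !lit_evalE fixc_ne // eq_sym.
by rewrite inE negb_or => /andP [ij /IH ->]; rewrite !lit_evalE fixc_ne // eq_sym.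
Qed.

Lemma neval_surj t v : wf_nested t -> exists x, neval t x = v.
Proof.
elim: t v => [j s|j s c t IH] v /=.
  exists (fixc (ptzero n) j (if v then s else ~~ s)).
  by rewrite lit_evalE fixc_at; case: v; case: s.
case/andP => jt wft; case: c; case: v.
- by exists (fixc (ptzero n) j s); rewrite lit_evalE fixc_at eqxx.
- have [y ty] := IH false wft; exists (fixc y j (~~ s)).
  by rewrite lit_evalE fixc_at neval_fixc // ty; case: s.
- have [y ty] := IH true wft; exists (fixc y j s).
  by rewrite lit_evalE fixc_at neval_fixc // ty eqxx.
- by exists (fixc (ptzero n) j (~~ s)); rewrite lit_evalE fixc_at; case: s.
Qed.

Lemma relevant_nvars t j : wf_nested t -> j \in nvars t -> relevantb (neval t) j.
Proof.
elim: t => [i s|i s c t IH] /=.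
  rewrite inE => _ /eqP ->; apply/relevantP; exists (ptzero n).
  by rewrite !lit_evalE !fixc_at; case: s.
case/andP => it wft; rewrite inE => /orP [/eqP ->|jt].
  have [y ty] := neval_surj (~~ c) wft.
  apply/relevantP; exists y; rewrite !lit_evalE !fixc_at !neval_fixc // ty.
  by case: (c); case: (s).
have ij : i != j by apply: contraNneq it => ->.
have /relevantP [y H] := IH wft jt.
have E u v : neval t (fixc (fixc y i u) j v) = neval t (fixc y j v).
  by rewrite (fixcC _ _ _ ij) neval_fixc.
apply/relevantP; exists (fixc y i (if c then ~~ s else s)).
rewrite /= !lit_evalE !E !fixcE eqxx (negPf ij).
by move: H; case: (c); case: (s); case: (neval t _); case: (neval t _).
Qed.

Lemma lro_forces f : lro f -> (exists c, forall x, f x = c) \/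
  exists d b c, forces f d b c /\ lro (restrict f d (~~ b)).
Proof.
case=> [H|[t [wft H]]]; [by left | right].
case: t wft H => [j s|j s [] t'] wft H.
- exists j, s, true; split; first by move=> x; rewrite H /= lit_evalE fixc_at eqxx.
  by left; exists false => x; rewrite /restrict H /= lit_evalE fixc_at; case: (s).
- move: wft => /= /andP [jt wft].
  exists j, s, true; split; first by move=> x; rewrite H /= lit_evalE fixc_at eqxx.
  right; exists t'; split => // x.
  by rewrite /restrict H /= lit_evalE fixc_at neval_fixc //; case: (s).
- move: wft => /= /andP [jt wft].
  exists j, (~~ s), false; split; first by move=> x; rewrite H /= lit_evalE fixc_at; case: (s).
  right; exists t'; split => // x.
  by rewrite /restrict H /= lit_evalE fixc_at neval_fixc // negbK eqxx.
Qed.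

Lemma forces_lro f d b c :
  forces f d b c -> relevantb f d -> lro (restrict f d (~~ b)) -> lro f.
Proof.
move=> D rd Hg.
have fE x : f x = if x d == b then c else restrict f d (~~ b) x.
  case: (eqVneq (x d) b) => [e|ne]; first by rewrite -(D x) fixc_id.
  by rewrite /restrict fixc_id //; move: ne; case: (x d); case: (b).
case: Hg => [[c' Hc]|[t [wft Ht]]].
  have cc : c' = ~~ c.
    apply: contraTeq rd => ne; apply/negP => /relevantP [x].
    by rewrite !fE !fixc_at !Hc; move: ne; case: (b); case: (c); case: (c').
  right; exists (Lit d (if c then b else ~~ b)); split => // x.
  by rewrite fE Hc cc /= lit_evalE; case: (c); case: (b); case: (x d).
have dt : d \notin nvars t.
  have Eg : neval t = restrict f d (~~ b) by apply: functional_extensionality.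
  apply/negP => /(relevant_nvars wft); rewrite Eg => /relevantP [x].
  by rewrite /restrict !fixcK eqxx.
right; case: (c) fE => fE.
  exists (Node d b true t); split; first by rewrite /= dt.
  by move=> x; rewrite fE Ht /= lit_evalE; case: (x d == b).
exists (Node d (~~ b) false t); split; first by rewrite /= dt.
move=> x; rewrite fE Ht /= lit_evalE.
by case: (eqVneq (x d) b) => [->|]; [case: (b) | case: (x d); case: (b)].
Qed.

End NestedFormulas.

Section ExtremalBounds.
Variable n : nat.
Implicit Types (x y : pt n) (f : pt n -> bool).

Lemma relevant_minone f i : positive f -> relevantb f i -> exists a, minone f a /\ a i.
Proof.
move=> P ri; have [x [h0 h1]] := relevant_positive P ri.
have [a [mo le]] := minone_below h1; exists a; split => //.
apply: contraT => /negbTE ai; case/negP: h0.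
apply: (P a); first by case/minoneP: mo.
apply/pleqP => l al; case: (eqVneq l i) => [e|ne]; first by move: ai; rewrite -e al.
by move/pleqP: le => /(_ l al); rewrite !fixc_ne.
Qed.

Lemma r_restrictF_lt f i : positive f -> relevantb f i -> r (restrict f i false) < r f.
Proof.
move=> P ri; have [a [mo ai]] := relevant_minone P ri.
rewrite (r_restrictF P i) -addn1 leq_add2l card_gt0; apply/set0Pn; exists a.
exact: minone_lost.
Qed.

Lemma r_restrict_lt f i b : positive f -> relevantb f i -> r (restrict f i b) < r f.
Proof.
case: b; last exact: r_restrictF_lt.
move=> P ri; rewrite -(r_dual f) -(r_dual (restrict f i true)) dual_restrict.
by apply: r_restrictF_lt; [exact: dual_positive | rewrite relevant_dual].
Qed.

Lemma r_forcesTT_le f i : positive f -> forces f i true true ->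
  r f <= (r (restrict f i false)).+1.
Proof.
move=> P D; rewrite (r_restrictF P i) -addn1 leq_add2l.
by rewrite -(cards1 (fixc (ptzero n) i true)) subset_leq_card // lost_forcesTT.
Qed.

Lemma r_forces_le f d b c : positive f -> forces f d b c ->
  r f <= (r (restrict f d (~~ b))).+1.
Proof.
move=> P; case: b; case: c => D.
- exact: r_forcesTT_le.
- rewrite (@constant_r _ f false) // => x; apply/negbTE/negP => fx.
  by have := P _ _ fx (pleq_fixcT x d); rewrite D.
- rewrite (@constant_r _ f true) // => x.
  by apply: (P (fixc x d false)); rewrite ?D // fixcF_pleq.
- rewrite -(r_dual f) -(r_dual (restrict f d true)) dual_restrict.
  apply: r_forcesTT_le; first exact: dual_positive.
  by move=> x; rewrite /dual -[true]/(~~ false) -fixc_compl D.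
Qed.

End ExtremalBounds.

Section OneLostExtremal.
Variable n : nat.
Implicit Types (x y z w : pt n).
Variable f : pt n -> bool.
Hypothesis fpos : positive f.
Variable i : 'I_n.
Local Notation f0 := (restrict f i false).
Hypothesis r_succ : r f = (r f0).+1.
Variable a : pt n.
Hypotheses (a_minone : minone f a) (a_i : a i).

Lemma lost_extremal1 : lost_extremal f i = [set a].
Proof.
have : #|lost_extremal f i| == 1.
  by move: r_succ; rewrite (r_restrictF fpos i) -addn1 => /eqP; rewrite eqn_add2l.
by case/cards1P => w Dw; move: (minone_lost a_minone a_i); rewrite Dw inE => /eqP ->.
Qed.

Lemma lost_minone_eq b : minone f b -> b i -> b = a.
Proof. by move=> mb bi; have := minone_lost mb bi; rewrite lost_extremal1 inE => /eqP. Qed.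

Lemma maxzero_restrictF_of z : maxzero f z -> z i -> maxzero f0 z.
Proof.
move=> mz zi; apply: maxzero_not_lost => //; rewrite lost_extremal1 inE.
apply/eqP => za; case/maxzeroP: mz; rewrite za; by case/minoneP: a_minone => ->.
Qed.

Lemma forcesFF_of_restrict d : forces f0 d false false -> a d -> forces f d false false.
Proof.
move=> Hd ad x; apply/negbTE/negP => fx.
have [b [mb le]] := minone_below fx.
have bd : b d = false by apply/negP => /(pleqP _ _ le); rewrite fixc_at.
case bi: (b i); first by move: ad; rewrite -(lost_minone_eq mb bi) bd.
have f0b : f0 b by rewrite /restrict fixc_id //; case/minoneP: mb.
by have := Hd b; rewrite (fixc_id bd) f0b.
Qed.

(* Otherwise the maximal zero of [f] above the all-ones point with [d] and [s] lowered
   would lie above [a] or above a one of [f0]. *)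
Lemma restrict_forcesFF_spread d s : forces f0 d false false -> a d = false ->
  s != i -> a s -> forces f0 s false false.
Proof.
move=> Hd ad si a_s w; apply/negbTE/negP => f0w.
have ds : d != s by apply: contraTneq a_s => <-; rewrite ad.
have di : d != i by apply: contraTneq a_i => <-; rewrite ad.
set z := fixc (fixc (ptone n) d false) s false.
have zl l : l != s -> l != d -> z l.
  by move=> ls ld; rewrite /z !fixcE (negPf ls) (negPf ld) ffunE.
have fz : ~~ f z.
  apply/negP => fz; have [b [mb le]] := minone_below fz.
  have bd : b d = false.
    by apply/negP => /(pleqP _ _ le); rewrite /z fixcE (negPf ds) fixc_at.
  case bi: (b i).
    move/pleqP: le => /(_ s); rewrite (lost_minone_eq mb bi) a_s /z fixc_at.
    by move/(_ isT).
  have := Hd b; rewrite /restrict (fixc_id bd) (fixc_id bi).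
  by case/minoneP: mb => ->.
have [z' [mz' lez]] := maxzero_above fz.
have z'i : z' i by apply: (pleqP _ _ lez); apply: zl; rewrite eq_sym.
have [nfz' _] := maxzeroP _ _ mz'.
case z'd: (z' d).
  case/negP: nfz'; apply: restrictF_le => //; apply: (restrict_positive fpos f0w).
  apply/pleqP => l wl; have [e|ls] := eqVneq l s; first by move: wl; rewrite e fixc_at.
  have [->|ld] := eqVneq l d; first by rewrite z'd.
  by apply: (pleqP _ _ lez); apply: zl.
have z's : z' s.
  case/maxzeroP: (maxzero_restrictF_of mz' z'i) => _ H.
  have := H (fixc z' s true).
  have -> : f0 (fixc z' s true) = false.
    by rewrite -[fixc z' s true](@fixc_id _ _ d false) ?Hd // fixc_ne.
  by move=> /(_ isT (pleq_fixcT _ _)) <-; rewrite fixc_at.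
case/negP: nfz'; apply: (fpos (x := a)); first by case/minoneP: a_minone.
apply/pleqP => l al; have [->//|ls] := eqVneq l s.
have [e|ld] := eqVneq l d; first by move: al; rewrite e ad.
by apply: (pleqP _ _ lez); apply: zl.
Qed.

Lemma restrict_forces_forces d b c : forces f0 d b c -> exists d b c, forces f d b c.
Proof.
case: c => Hd.
  by exists d, b, true => x; apply: restrictF_le.
case: b Hd => Hd.
  exists i, false, false => x; apply/negbTE/negP => h.
  by have := restrict_positive fpos h (pleq_fixcT x d); rewrite /restrict in Hd *; rewrite Hd.
case ad: (a d); first by exists d, false, false; apply: forcesFF_of_restrict.
case: (pickP (fun s => (s != i) && a s)) => [s /andP [si a_s]|none].
  exists s, false, false; apply: forcesFF_of_restrict => //.
  exact: restrict_forcesFF_spread Hd ad si a_s.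
exists i, true, true => x; apply: (fpos (x := a)); first by case/minoneP: a_minone.
apply/pleqP => l al; rewrite fixcE; case: eqP => // /eqP ne.
by have := none l; rewrite ne al.
Qed.

End OneLostExtremal.

Lemma lro_restrict_forces n (f : pt n -> bool) i b : positive f -> relevantb f i ->
  r f = (r (restrict f i b)).+1 -> lro (restrict f i b) -> exists d b c, forces f d b c.
Proof.
wlog -> : f b / b = false => [hwlog|].
  case: b; last exact: hwlog.
  move=> P ri Hr Hl.
  have [d [b' [c /dual_forces D]]] : exists d b c, forces (dual f) d b c.
    apply: (hwlog _ false erefl); first exact: dual_positive.
    - by rewrite relevant_dual.
    - by rewrite -(dual_restrict f i true) !r_dual.
    - by rewrite -(dual_restrict f i true); apply: lro_dual.
  by exists d, (~~ b'), (~~ c).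
move=> P ri Hr; have [a [ma ai]] := relevant_minone P ri.
case/lro_forces => [[c Hc]|[d [b' [c [D _]]]]].
  by exists i, false, c.
exact: (restrict_forces_forces P Hr ma ai D).
Qed.

Section RelevantRestrict.
Variable n : nat.
Implicit Types (x y w : pt n) (f : pt n -> bool).

Lemma relevant_restrict f i b l : relevantb (restrict f i b) l -> (l != i) && relevantb f l.
Proof.
move=> /relevantP [x H]; apply/andP; split.
  by apply: contraNneq H => ->; rewrite /restrict !fixcK eqxx.
apply/relevantP; exists (fixc x i b); move: H; rewrite /restrict.
by have [->|ne] := eqVneq l i; rewrite ?fixcK ?eqxx // !(fixcC _ _ _ ne).
Qed.

Lemma nrel_restrict f i b : relevantb f i ->
  (forall l, l != i -> relevantb f l -> relevantb (restrict f i b) l) ->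
  nrel (restrict f i b) = (nrel f).-1.
Proof.
move=> ri H; rewrite /nrel (cardsD1 i [set l | relevantb f l]) inE ri /=.
apply: eq_card => l; rewrite !inE; apply/idP/idP; first exact: relevant_restrict.
by case/andP => li rl; apply: H.
Qed.

Lemma forces_relevant f d b c : forces f d b c -> 0 < nrel f -> relevantb f d.
Proof.
move=> D; apply: contraTT; rewrite -leqNgt leqn0 => nr; apply/eqP.
by apply: (@constant_nrel0 _ f c) => x; rewrite -(irrelevant_fixc x b nr).
Qed.

Lemma nrel_restrict_forces f d b c : forces f d b c -> 0 < nrel f ->
  nrel (restrict f d (~~ b)) = (nrel f).-1.
Proof.
move=> D nr; apply: nrel_restrict; first exact: forces_relevant D nr.
move=> l ld /relevantP [x H]; apply/relevantP.
have E v : fixc (fixc x l v) d (x d) = fixc x l v by apply: fixc_id; rewrite fixc_ne // eq_sym.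
have [xb|xnb] := eqVneq (x d) b.
  by move: H; rewrite -(E false) -(E true) xb !D eqxx.
exists x; rewrite /restrict (_ : ~~ b = x d) ?E //.
by move: xnb; case: (x d); case: (b).
Qed.

Section Twins.
Variable f : pt n -> bool.
Hypothesis fpos : positive f.
Variables i j : 'I_n.

Definition minones_at l := [set a | minone f a && a l].

Lemma minone_irrelevant_restrictF a : j != i -> ~~ relevantb (restrict f i false) j ->
  minone f a -> a j -> a i.
Proof.
move=> ji nrj ma aj; apply: contraT => /negbTE ai; case/negP: nrj.
have ij : i != j by rewrite eq_sym.
apply/relevantP; exists a; rewrite /restrict (fixc_id aj) (fixc_id ai).
rewrite (@fixc_id _ (fixc a j false) i false) ?fixc_ne //.
case/minoneP: ma => -> H; case fa': (f (fixc a j false)) => //.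
have /(congr1 (fun w : pt n => w j)) := H _ fa' (fixcF_pleq a j).
by rewrite fixc_at aj.
Qed.

Lemma minones_at_eq : minones_at j \subset minones_at i ->
  #|minones_at i| <= #|minones_at j| -> forall a, minone f a -> a i = a j.
Proof.
move=> S le a ma; have E : minones_at j = minones_at i by apply/eqP; rewrite eqEcard S.
have : (a \in minones_at j) = (a \in minones_at i) by rewrite E.
rewrite !inE ma.
by case: (a i); case: (a j).
Qed.

Hypotheses (ji : j != i) (twins : forall a, minone f a -> a i = a j).

Lemma twins_fixc y : y j = false -> f (fixc y i true) = f (fixc y i false).
Proof.
move=> yj; apply/idP/idP; last by move/fpos; apply; apply: pleq_trans (fixcF_pleq y i) (pleq_fixcT y i).
move=> h; have [a [ma le]] := minone_below h.
have aj : a j = false.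
  by apply/negP => /(pleqP _ _ le); rewrite fixc_ne ?yj.
apply: (fpos (x := a)); first by case/minoneP: ma.
apply/pleqP => l al; have [e|ne] := eqVneq l i; first by move: al; rewrite e twins // aj.
by rewrite fixc_ne //; move/pleqP: le => /(_ l al); rewrite fixc_ne.
Qed.

End Twins.

Lemma twins_restrictT f i j : positive f -> j != i ->
  (forall a, minone f a -> a i = a j) ->
  forall l, l != i -> relevantb f l -> relevantb (restrict f i true) l.
Proof.
move=> P ji tw.
have ij : i != j by rewrite eq_sym.
have tw' a : minone f a -> a j = a i by move=> /tw ->.
have move_i w : w i = false -> f w = f (fixc (fixc w j false) i true).
  move=> wi; rewrite (twins_fixc P ji tw) ?fixc_at //.
  rewrite (@fixc_id _ (fixc w j false) i false) ?fixc_ne //.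
  case wj: (w j); last by rewrite fixc_id.
  by rewrite -{1}(fixc_id wj) (twins_fixc P ij tw').
move=> l li /relevantP [x H]; apply/relevantP; rewrite /restrict.
case xi: (x i).
  by exists x; rewrite !(fixc_id (x := fixc x l _) (k := i)) // fixc_ne // eq_sym.
have [e|lj] := eqVneq l j.
  move: H; rewrite e (move_i (fixc x j false)) ?(move_i (fixc x j true)) ?fixc_ne //.
  by rewrite !fixcK eqxx.
exists (fixc x j false); rewrite !(fixcC _ _ _ (_ : j != l)) 1?eq_sym //.
by rewrite -!move_i ?fixc_ne // eq_sym.
Qed.

Lemma exists_relevant_restrict f : positive f -> 0 < nrel f ->
  exists i b, relevantb f i /\ nrel (restrict f i b) = (nrel f).-1.
Proof.
move=> P; rewrite card_gt0 => /set0Pn [i0]; rewrite inE => ri0.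
have [i ri Hmin] := arg_minnP (fun l => #|minones_at f l|) ri0.
case: (boolP [forall l, (l != i) && relevantb f l ==> relevantb (restrict f i false) l]).
  move=> /forallP H; exists i, false; split => //; apply: nrel_restrict => // l li rl.
  by have := H l; rewrite li rl.
rewrite negb_forall => /existsP [j]; rewrite negb_imply => /andP [/andP [ji rj] nrj].
exists i, true; split => //; apply: nrel_restrict => //; apply: (twins_restrictT P ji).
apply: minones_at_eq; last exact: Hmin.
apply/subsetP => a; rewrite !inE => /andP [ma aj].
by rewrite ma (minone_irrelevant_restrictF ji nrj ma aj).
Qed.

End RelevantRestrict.

Section Main.
Variable n : nat.
Implicit Types (f : pt n -> bool).

Lemma nrel0_lro f : nrel f = 0 -> lro f.
Proof. by move=> nr; left; exists (f (ptzero n)) => x; apply: nrel0_constant. Qed.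

Lemma nrel0_r f : nrel f = 0 -> r f = 1.
Proof. by move=> nr; apply: (@constant_r _ f (f (ptzero n))) => x; apply: nrel0_constant. Qed.

Lemma nrel_lt_r f : positive f -> nrel f < r f.
Proof.
move=> P; move Ek: (nrel f) => k; elim: k f P Ek => [|k IH] f P nr.
  by rewrite nrel0_r.
have /(exists_relevant_restrict P) [i [b [ri nri]]] : 0 < nrel f by rewrite nr.
apply: leq_ltn_trans (r_restrict_lt b P ri).
by apply: IH; [exact: restrict_positive | rewrite nri nr].
Qed.

Lemma r_restrict_succ f i b : positive f -> relevantb f i ->
  nrel (restrict f i b) = (nrel f).-1 -> r f = (nrel f).+1 ->
  r (restrict f i b) = (nrel (restrict f i b)).+1.
Proof.
move=> P ri nri Hr; have lt := r_restrict_lt b P ri.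
have gt := nrel_lt_r (restrict_positive (k := i) (b := b) P).
have pos : 0 < nrel f by rewrite card_gt0; apply/set0Pn; exists i; rewrite inE.
by apply/eqP; rewrite eqn_leq gt andbT -ltnS; move: lt; rewrite Hr nri prednK.
Qed.

Lemma lro_r f : positive f -> lro f -> r f = (nrel f).+1.
Proof.
move=> P; move Ek: (nrel f) => k; elim: k f P Ek => [|k IH] f P nr Hl.
  exact: nrel0_r.
have [[c Hc]|[d [b [c [D Hd]]]]] := lro_forces Hl.
  by move: nr; rewrite (constant_nrel0 Hc).
have nrd : nrel (restrict f d (~~ b)) = k by rewrite (nrel_restrict_forces D) nr.
have rd := IH _ (restrict_positive (k := d) (b := ~~ b) P) nrd Hd.
have ub : r f <= k.+2 by rewrite -rd; exact: r_forces_le D.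
have lb : k.+2 <= r f by rewrite -nr; exact: nrel_lt_r.
by apply/eqP; rewrite eqn_leq ub lb.
Qed.

Lemma r_lro f : positive f -> r f = (nrel f).+1 -> lro f.
Proof.
move=> P; move Ek: (nrel f) => k; elim: k f P Ek => [|k IH] f P nr Hr.
  exact: nrel0_lro.
have nr_gt0 : 0 < nrel f by rewrite nr.
have succ j c : relevantb f j -> nrel (restrict f j c) = k -> r (restrict f j c) = k.+1.
  by move=> rj nrj; rewrite -nrj (r_restrict_succ P rj) // ?nrj ?nr.
have [i [b [ri nri]]] := exists_relevant_restrict P nr_gt0.
have {}nri : nrel (restrict f i b) = k by rewrite nri nr.
have Hl := IH _ (restrict_positive (k := i) (b := b) P) nri (succ i b ri nri).
have [d [b' [c D]]] : exists d b c, forces f d b c.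
  by apply: (lro_restrict_forces P ri _ Hl); rewrite Hr succ.
have rd := forces_relevant D nr_gt0.
have nrd : nrel (restrict f d (~~ b')) = k by rewrite (nrel_restrict_forces D nr_gt0) nr.
exact: forces_lro D rd (IH _ (restrict_positive (k := d) (b := ~~ b') P) nrd (succ _ _ rd nrd)).
Qed.

End Main.

Theorem mainTheorem1 (n : nat) (f : pt n -> bool) (k : nat) :
  positive f -> nrel f = k ->
  k.+1 <= r f /\ (r f = k.+1 <-> lro f).
Proof.
move=> P <-; split; first exact: nrel_lt_r.
by split; [exact: r_lro | exact: lro_r].
Qed.
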